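(* Let $(E,\le,u)$ be an ordered effect space whose positive cone $E_+$ is pointed. Let $A$ be a finite set of positive subunital linear maps $E\to E$ that is closed under composition (i.e. $S,T\in A$ implies $S\circ T\in A$). Then for each $T\in A$ there exists an integer $n\ge 1$ such that \[ T^n(d(T))=0, \] and moreover this $n$ can be chosen with $n\le |A|$.
   Context: An ordered effect space is a triple $(E,\le,u)$ where $E$ is a real vector space, $\le$ is a preorder (reflexive and transitive) on $E$ compatible with the vector space structure ($x\le y$ implies $x+z\le y+z$ and $\lambda x\le\lambda y$ for all $z\in E$, $\lambda\ge 0$), and $u\in E_+$ is a distinguished element called the unit, where $E_+=\{x\in E: x\ge 0\}$ is the positive cone. The cone is pointed if $E_+\cap(-E_+)=\{0\}$. A linear map $T:E\to E$ is positive if $T(E_+)\subseteq E_+$, subunital if $T(u)\le u$, unital if $T(u)=u$. The defect of a subunital map $T$ is $d(T)=u-T(u)$ (so $d(T)\ge 0$). $T^n$ denotes the $n$-fold composite. *)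

From HB Require Import structures.
From mathcomp Require Import all_boot all_order all_algebra.
From mathcomp Require Import reals.
From Stdlib Require List.
Set Implicit Arguments. Unset Strict Implicit. Unset Printing Implicit Defensive.
Import Order.TTheory GRing.Theory Num.Theory.
Local Open Scope ring_scope.

Definition compatible_preorder (R : realType) (E : lmodType R)
  (le : E -> E -> Prop) : Prop :=
  (forall x, le x x) /\
  (forall x y z, le x y -> le y z -> le x z) /\
  (forall x y z, le x y -> le (x + z) (y + z)) /\
  (forall (l : R) x y, 0 <= l -> le x y -> le (l *: x) (l *: y)).

Definition ordered_effect_space (R : realType) (E : lmodType R)
  (le : E -> E -> Prop) (u : E) : Prop :=
  compatible_preorder le /\ le 0 u.

Definition pointed_cone (R : realType) (E : lmodType R)
  (le : E -> E -> Prop) : Prop :=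
  forall x : E, le 0 x -> le 0 (- x) -> x = 0.

Definition positive_map (R : realType) (E : lmodType R)
  (le : E -> E -> Prop) (T : E -> E) : Prop :=
  forall x, le 0 x -> le 0 (T x).

Definition subunital (R : realType) (E : lmodType R)
  (le : E -> E -> Prop) (u : E) (T : E -> E) : Prop := le (T u) u.

Definition defect (R : realType) (E : lmodType R) (u : E) (T : E -> E) : E :=
  u - T u.

(* The orbit T^k u of the unit is decreasing, since T is positive and T u <= u.
   As A is closed under composition, the powers T, T^2, ..., T^(|A|+1) all lie
   in A, so two of them coincide: T^m = T^n with 1 <= m < n <= |A| + 1.  Then
   T^m u = T^n u <= T^(m+1) u <= T^m u, and pointedness of the cone forces
   T^m (u - T u) = T^m u - T^(m+1) u = 0. *)

From HB Require Import structures.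
From mathcomp Require Import all_boot all_order all_algebra.
From mathcomp Require Import reals.
From mathcomp Require Import boolp.
From Stdlib Require List.

Set Implicit Arguments.
Unset Strict Implicit.
Unset Printing Implicit Defensive.
Import Order.TTheory GRing.Theory Num.Theory.
Local Open Scope ring_scope.

Lemma mem_of_In (X : eqType) (x : X) (s : seq X) : List.In x s -> x \in s.
Proof.
elim: s => //= y s IHs [->|/IHs xs]; by rewrite in_cons ?eqxx ?xs ?orbT.
Qed.

Lemma pigeonhole_In (X : Type) (s : seq X) (f : nat -> X) :
  (forall k, (k <= size s)%N -> List.In (f k) s) ->
  exists i j, (i < j <= size s)%N /\ f i = f j.
Proof.
move=> fs.
(* [{classic X}] equips [X] with a (classical) decidable equality. *)
pose t := [seq (f k : {classic X}) | k <- iota 0 (size s).+1].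
have t_sub : {subset t <= (s : seq {classic X})}.
  move=> x /mapP[k]; rewrite mem_iota add0n ltnS => /= /fs ks ->.
  exact: mem_of_In.
have t_not_uniq : ~~ uniq t.
  apply/negP => /uniq_leq_size/(_ t_sub).
  by rewrite size_map size_iota ltnn.
have [i [j [ij]]] := uniqPn (f 0%N : {classic X}) t_not_uniq.
rewrite size_map size_iota ltnS => js.
have i_le : (i < (size s).+1)%N by rewrite ltnS ltnW // (leq_trans ij js).
rewrite !(nth_map 0%N) ?size_iota ?ltnS // !nth_iota ?ltnS // !add0n => fij.
by exists i, j; rewrite ij js.
Qed.

Section OrderedSpace.

Variables (R : realType) (E : lmodType R) (le : E -> E -> Prop) (u : E).
Hypothesis le_preorder : compatible_preorder le.

Lemma le_subr_ge0 (x y : E) : le x y <-> le 0 (y - x).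
Proof.
have [_ [_ [le_add _]]] := le_preorder.
split=> [/(le_add _ _ (- x))|/(le_add _ _ x)]; first by rewrite subrr.
by rewrite add0r subrK.
Qed.

Variable T : E -> E.
Hypotheses (T_linear : linear T) (T_positive : positive_map le T)
  (T_subunital : subunital le u T).

Lemma iterB (k : nat) (x y : E) : iter k T (x - y) = iter k T x - iter k T y.
Proof.
elim: k => [//|k IHk] /=.
by rewrite IHk -scaleN1r addrC T_linear scaleN1r addrC.
Qed.

Lemma iter_positive (k : nat) (x : E) : le 0 x -> le 0 (iter k T x).
Proof. by elim: k => [|k IHk] // /IHk /T_positive. Qed.

Lemma iter_defect (k : nat) :
  iter k T (defect u T) = iter k T u - iter k.+1 T u.
Proof. by rewrite /defect iterB -iterSr. Qed.

Lemma iter_unit_succ (k : nat) : le (iter k.+1 T u) (iter k T u).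
Proof.
apply/le_subr_ge0; rewrite -iter_defect.
by apply/iter_positive/(le_subr_ge0 _ _).1.
Qed.

Lemma iter_unit_decreasing (m n : nat) :
  (m <= n)%N -> le (iter n T u) (iter m T u).
Proof.
have [le_refl [le_trans _]] := le_preorder.
move=> /subnK <-; elim: (n - m)%N => [|d IHd]; first exact: le_refl.
exact: le_trans (iter_unit_succ _) IHd.
Qed.

Hypothesis le_pointed : pointed_cone le.

Lemma iter_defect_eq0 (m n : nat) :
  (m < n)%N -> iter m T u = iter n T u -> iter m T (defect u T) = 0.
Proof.
move=> mn Tmn; rewrite iter_defect; apply: le_pointed.
  exact: (le_subr_ge0 _ _).1 (iter_unit_succ _).
rewrite opprB; apply: (le_subr_ge0 _ _).1; rewrite Tmn.
exact: iter_unit_decreasing.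
Qed.

End OrderedSpace.

Lemma iter_In (X : Type) (A : seq (X -> X)) (T : X -> X) :
  (forall S T, List.In S A -> List.In T A -> List.In (S \o T) A) ->
  List.In T A -> forall k, List.In (iter k.+1 T) A.
Proof. by move=> A_comp TA; elim=> [//|k IHk]; apply: A_comp. Qed.

Theorem theorem4p1 (R : realType) (E : lmodType R) (le : E -> E -> Prop) (u : E)
  (A : seq (E -> E)) :
  ordered_effect_space le u ->
  pointed_cone le ->
  List.NoDup A ->
  (forall T, List.In T A -> linear T /\ positive_map le T /\ subunital le u T) ->
  (forall S T, List.In S A -> List.In T A -> List.In (S \o T) A) ->
  forall T, List.In T A ->
    exists n : nat, (1 <= n <= size A)%N /\ iter n T (defect u T) = 0.
Proof.
(* Duplicates in [A] would only enlarge [size A]. *)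
move=> [le_preorder _] le_pointed _ A_maps A_comp T TA.
have [T_linear [T_positive T_subunital]] := A_maps T TA.
have [i [j [/andP[ij jA] Tij]]] :=
  pigeonhole_In (fun k _ => iter_In A_comp TA k).
exists i.+1; split; first by rewrite (leq_trans ij jA).
exact: (iter_defect_eq0 le_preorder T_linear T_positive T_subunital le_pointed
  (ij : i.+1 < j.+1)%N (congr1 (@^~ u) Tij)).
Qed.
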